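(* Let $\langle A,\to\rangle$ be a conditional algebra, and for $U,V\subseteq\mathrm{Ul}(A)$ define $$U\to^{\sigma}V=\bigcup_{(O,Y)}\ \bigcap_{\substack{a,b\in A\\ \varphi(a)\subseteq O,\ Y\subseteq\varphi(b)}}\varphi(a\to b),$$ where $(O,Y)$ ranges over pairs with $O$ an open subset of the Stone space of $A$ with $U\subseteq O$ and $Y$ a closed subset with $Y\subseteq V$. Then $\langle\mathcal{P}(\mathrm{Ul}(A)),\to^{\sigma}\rangle$ is a conditional algebra.
   Context: A conditional algebra is a pair $\langle A,\to\rangle$ where $A$ is a Boolean algebra and $\to$ is a binary operation on $A$ such that for all $a,b,c$: $a\to 1=1$; $(a\to b)\wedge(a\to c)=a\to(b\wedge c)$; $(a\vee b)\to c\le (a\to c)\wedge(b\to c)$. $\mathrm{Ul}(A)$ is the set of ultrafilters of $A$ with the Stone topology (basic clopens $\varphi(a)=\{u:a\in u\}$). The operation $\to^\sigma$ is the $\sigma$-extension of $\to$ (viewed as antitone in the first and isotone in the second argument). *)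

From HB Require Import structures.
From mathcomp Require Import all_boot all_order.
From mathcomp Require Import boolp classical_sets.
Import Order.TTheory.
Export SetOrder.Exports.

Set Implicit Arguments.
Unset Strict Implicit.
Unset Printing Implicit Defensive.

Local Open Scope order_scope.

(* A Boolean algebra is a complemented distributive lattice with top and bottom
   (MathComp's ctbDistrLatticeType). *)

Definition conditional_algebra {d : Order.disp_t} (A : ctbDistrLatticeType d)
    (imp : A -> A -> A) : Prop :=
  [/\ (forall a : A, imp a \top = \top),
      (forall a b c : A, Order.meet (imp a b) (imp a c) = imp a (Order.meet b c))
    & (forall a b c : A, imp (Order.join a b) c <= Order.meet (imp a c) (imp b c))].

Local Open Scope classical_set_scope.

Definition is_filter {d : Order.disp_t} (A : ctbDistrLatticeType d) (F : set A) : Prop :=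
  [/\ F \top,
      (forall a b : A, F a -> (a <= b)%O -> F b)
    & (forall a b : A, F a -> F b -> F (Order.meet a b))].

Definition is_proper_filter {d : Order.disp_t} (A : ctbDistrLatticeType d) (F : set A) : Prop :=
  is_filter F /\ ~ F \bot.

Definition is_ultrafilter {d : Order.disp_t} (A : ctbDistrLatticeType d) (F : set A) : Prop :=
  is_proper_filter F /\
  (forall G : set A, is_proper_filter G -> F `<=` G -> G = F).

Definition Ul {d : Order.disp_t} (A : ctbDistrLatticeType d) : Type :=
  {F : set A | is_ultrafilter F}.

Definition phi {d : Order.disp_t} (A : ctbDistrLatticeType d) (a : A) : set (Ul A) :=
  [set u | proj1_sig u a].

Definition stone_open {d : Order.disp_t} (A : ctbDistrLatticeType d) (O : set (Ul A)) : Prop :=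
  forall u, O u -> exists a : A, phi a u /\ phi a `<=` O.

Definition stone_closed {d : Order.disp_t} (A : ctbDistrLatticeType d) (Y : set (Ul A)) : Prop :=
  stone_open (~` Y).

Definition sigma_imp {d : Order.disp_t} (A : ctbDistrLatticeType d) (imp : A -> A -> A)
    (U V : set (Ul A)) : set (Ul A) :=
  [set u | exists (O Y : set (Ul A)),
      [/\ stone_open O, U `<=` O, stone_closed Y, Y `<=` V &
          forall a b : A, phi a `<=` O -> Y `<=` phi b -> phi (imp a b) u]].

From HB Require Import structures.
From mathcomp Require Import all_boot all_order.
From mathcomp Require Import boolp classical_sets.

Set Implicit Arguments.
Unset Strict Implicit.
Unset Printing Implicit Defensive.

Import Order.Theory.
Local Open Scope classical_set_scope.

(* The monotonicity properties of [sigma_imp] hold by construction; the other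
   two axioms rest on Stone duality.  Only [phi \top] covers Ul(A), so
   [setT `<=` phi b] forces [a -> b = \top].  By compactness, if closed Y1, Y2
   satisfy [Y1 `&` Y2 `<=` phi b], then [Y1 `<=` phi c1] and [Y2 `<=` phi c2] for
   some c1, c2 with [c1 `&` c2 <= b].  Hence if (O1, Y1) and (O2, Y2) witness that
   u lies in [sigma_imp imp U V] and in [sigma_imp imp U W], then
   (O1 `&` O2, Y1 `&` Y2) witnesses that u lies in [sigma_imp imp U (V `&` W)]:
   u contains (a -> c1) `&` (a -> c2) = a -> (c1 `&` c2), which is below a -> b.
   Both facts come from the ultrafilter theorem in the form: a filter missing b
   extends to an ultrafilter missing b. *)

Section StoneSpace.
Variables (d : Order.disp_t) (A : ctbDistrLatticeType d).
Implicit Types (F G : set A) (O Y : set (Ul A)) (u w : Ul A) (a b c x y : A).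

Definition principal_filter a : set A := [set x | (a <= x)%O].

Definition filter_join F G : set A :=
  [set x | exists f g, [/\ F f, G g & (f `&` g <= x)%O]].

Lemma is_filter_principal a : is_filter (principal_filter a).
Proof.
split=> [|x y|x y]; rewrite /principal_filter/=; first exact: lex1.
  exact: le_trans.
by move=> ax ay; rewrite lexI ax ay.
Qed.

Lemma is_filter_join F G : is_filter F -> is_filter G -> is_filter (filter_join F G).
Proof.
case=> FT _ FI [GT _ GI]; split.
- by exists \top%O, \top%O; split; rewrite ?lex1.
- by move=> x y [f [g [Ff Gg fgx]]] xy; exists f, g; split; rewrite ?(le_trans fgx).
- move=> x y [f [g [Ff Gg fgx]]] [f' [g' [Ff' Gg' fgy]]].
  exists (f `&` f')%O, (g `&` g')%O; split; [exact: FI|exact: GI|].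
  rewrite lexI; apply/andP; split.
    by apply: le_trans fgx; apply: leI2; exact: leIxl.
  by apply: le_trans fgy; apply: leI2; exact: leIxr.
Qed.

Lemma sub_filter_joinl F G : is_filter G -> F `<=` filter_join F G.
Proof. by case=> GT _ _ f Ff; exists f, \top%O; split; rewrite ?meetx1. Qed.

Lemma sub_filter_joinr F G : is_filter F -> G `<=` filter_join F G.
Proof. by case=> FT _ _ g Gg; exists \top%O, g; split; rewrite ?meet1x. Qed.

Lemma filter_join_bot F G : filter_join F G \bot%O ->
  exists f g, [/\ F f, G g & (f <= ~` g)%O].
Proof. by case=> f [g [Ff Gg]]; rewrite lex0 disj_leC; exists f, g. Qed.

Lemma is_filter_ultra u : is_filter (proj1_sig u).
Proof. by case: u => F [[]]. Qed.

Lemma ultra_top u : proj1_sig u \top%O.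
Proof. by case: (is_filter_ultra u). Qed.

Lemma ultra_le u a b : proj1_sig u a -> (a <= b)%O -> proj1_sig u b.
Proof. by case: (is_filter_ultra u) => _ + _; apply. Qed.

Lemma ultra_meet u a b : proj1_sig u a -> proj1_sig u b -> proj1_sig u (a `&` b)%O.
Proof. by case: (is_filter_ultra u) => _ _; apply. Qed.

Lemma ultra_bot u : ~ proj1_sig u \bot%O.
Proof. by case: u => F [[]]. Qed.

Lemma ultra_Ncompl u a : proj1_sig u a -> ~ proj1_sig u (~` a)%O.
Proof.
by move=> ua uNa; apply: (@ultra_bot u); rewrite -(meetxC a); exact: ultra_meet.
Qed.

Lemma ultra_compl u a : ~ proj1_sig u a -> proj1_sig u (~` a)%O.
Proof.
move=> Nua; have Fa := is_filter_principal a.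
have [/filter_join_bot[f [g [uf ag fg]]]|Nbot] :=
  pselect (filter_join (proj1_sig u) (principal_filter a) \bot%O).
  by apply: ultra_le uf (le_trans fg _); rewrite lexC complK.
have uJ := @sub_filter_joinl (proj1_sig u) _ Fa.
have PJ := conj (is_filter_join (is_filter_ultra u) Fa) Nbot.
exfalso; apply: Nua; rewrite -(proj2 (proj2_sig u) _ PJ uJ).
by apply: (sub_filter_joinr (is_filter_ultra u)); exact: lexx.
Qed.

(* The chains are of sets G with F `|` G a proper filter, rather than of proper
   filters containing F, so that the empty chain also has an upper bound. *)
Lemma proper_filter_chain_union F (C : set (set A)) :
  is_proper_filter F -> (forall G, C G -> is_proper_filter (F `|` G)) ->
  total_on C subset -> is_proper_filter (F `|` \bigcup_(G in C) G).
Proof.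
move=> [[FT Fle FI] NF0] CF Ctot.
have sub_union G : C G -> F `|` G `<=` F `|` \bigcup_(G in C) G.
  by move=> CG; apply/setUS/bigcup_sup.
have common x y : (F `|` \bigcup_(G in C) G) x -> (F `|` \bigcup_(G in C) G) y ->
    (F x /\ F y) \/ exists2 G, C G & (F `|` G) x /\ (F `|` G) y.
  move=> [Fx|[G CG Gx]] [Fy|[G' CG' Gy]]; first by left.
  - by right; exists G' => //; split; [left|right].
  - by right; exists G => //; split; [right|left].
  - have [GG'|G'G] := Ctot _ _ CG CG'.
      by right; exists G' => //; split; right => //; exact: GG'.
    by right; exists G => //; split; right => //; exact: G'G.
split; first split.
- by left.
- move=> x y [Fx|[G CG Gx]] xy; first by left; exact: Fle xy.
  have [[_ Gle _] _] := CF G CG.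
  by apply: (sub_union G CG); apply: Gle xy; right.
- move=> x y Jx Jy; have [[Fx Fy]|[G CG [Gx Gy]]] := common x y Jx Jy.
    by left; exact: FI.
  have [[_ _ GI] _] := CF G CG.
  by apply: (sub_union G CG); exact: GI.
- by case=> [//|[G CG G0]]; case: (CF G CG) => _; apply; right.
Qed.

Lemma ultrafilter_ext F : is_proper_filter F -> exists u : Ul A, F `<=` proj1_sig u.
Proof.
move=> PF.
have [M [PFM Mmax]] := @Zorn_bigcup _ (fun G => is_proper_filter (F `|` G))
  (fun C => @proper_filter_chain_union F C PF).
have FM_ultra : is_ultrafilter (F `|` M).
  split=> // G PG FMG.
  have FG : F `<=` G by move=> x Fx; apply: FMG; left.
  have MG : M `<=` G by move=> x Mx; apply: FMG; right.
  have GM : G `<=` M.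
    apply/not_notP => NGM; apply: (Mmax G); first by split.
    by move/setUidPr: FG => ->.
  by apply/seteqP; split=> // x /GM Mx; right.
by exists (exist _ _ FM_ultra); exact: subsetUl.
Qed.

Lemma ultrafilter_sep F b : is_filter F -> ~ F b ->
  exists u : Ul A, F `<=` proj1_sig u /\ ~ proj1_sig u b.
Proof.
move=> FF NFb; have FNb := is_filter_principal (~` b)%O.
have PJ : is_proper_filter (filter_join F (principal_filter (~` b)%O)).
  split; first exact: is_filter_join.
  case/filter_join_bot=> f [g [Ff Nbg fg]]; have [_ Fle _] := FF.
  by apply/NFb/(Fle _ _ Ff)/(le_trans fg); rewrite -[b]complK leC.
have [u Ju] := ultrafilter_ext PJ.
exists u; split; first exact: subset_trans (sub_filter_joinl FNb) Ju.
move=> ub; apply: (ultra_Ncompl ub); apply/Ju/(sub_filter_joinr FF); exact: lexx.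
Qed.

Definition clopen_filter Y : set A := [set c | Y `<=` phi c].

Lemma is_filter_clopen Y : is_filter (clopen_filter Y).
Proof.
split=> [v _|x y Yx xy v /Yx vx|x y Yx Yy v Yv]; first exact: ultra_top.
  exact: ultra_le xy.
by apply: ultra_meet; [exact: Yx|exact: Yy].
Qed.

Lemma stone_closed_hull Y w : stone_closed Y -> clopen_filter Y `<=` proj1_sig w -> Y w.
Proof.
move=> cY Yw; apply/not_notP => NYw; have [a [wa aNY]] := cY w NYw.
have YNa : clopen_filter Y (~` a)%O by move=> v Yv; apply: ultra_compl => /aNY.
exact: ultra_Ncompl wa (Yw _ YNa).
Qed.

Lemma setT_sub_phi b : setT `<=` phi b -> b = \top%O.
Proof.
move=> Tb; apply/not_notP => NbT.
have [|u [_ Nub]] := @ultrafilter_sep (principal_filter \top%O) b (is_filter_principal _).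
  by rewrite /principal_filter/= le1x => /eqP.
exact/Nub/Tb.
Qed.

Lemma closedI_sub_phi Y1 Y2 b : stone_closed Y1 -> stone_closed Y2 ->
  Y1 `&` Y2 `<=` phi b ->
  exists c1 c2, [/\ Y1 `<=` phi c1, Y2 `<=` phi c2 & (c1 `&` c2 <= b)%O].
Proof.
move=> cY1 cY2 Yb.
have [//|NJb] := pselect (filter_join (clopen_filter Y1) (clopen_filter Y2) b).
have F1 := is_filter_clopen Y1; have F2 := is_filter_clopen Y2.
have [w [Jw Nwb]] := ultrafilter_sep (is_filter_join F1 F2) NJb.
exfalso; apply/Nwb/Yb; split; apply: stone_closed_hull => //.
  exact: subset_trans (sub_filter_joinl F2) Jw.
exact: subset_trans (sub_filter_joinr F1) Jw.
Qed.

Lemma stone_openT : stone_open (@setT (Ul A)).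
Proof. by move=> u _; exists \top%O; split => //; exact: ultra_top. Qed.

Lemma stone_closedT : stone_closed (@setT (Ul A)).
Proof. by move=> u /(_ I). Qed.

Lemma stone_openI O1 O2 : stone_open O1 -> stone_open O2 -> stone_open (O1 `&` O2).
Proof.
move=> oO1 oO2 u [O1u O2u].
have [a1 [ua1 a1O1]] := oO1 u O1u; have [a2 [ua2 a2O2]] := oO2 u O2u.
exists (a1 `&` a2)%O; split; first exact: ultra_meet.
by move=> v va; split; [apply: a1O1|apply: a2O2]; apply: ultra_le va _;
  [exact: leIxl|exact: leIxr].
Qed.

Lemma stone_closedI Y1 Y2 :
  stone_closed Y1 -> stone_closed Y2 -> stone_closed (Y1 `&` Y2).
Proof.
move=> cY1 cY2 u NY12u; have [Y1u|NY1u] := pselect (Y1 u).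
  have [|a [ua aNY2]] := cY2 u; first by move=> Y2u; exact: NY12u.
  by exists a; split => // v va [_]; exact: aNY2.
have [a [ua aNY1]] := cY1 u NY1u.
by exists a; split => // v va [Y1v _]; exact: aNY1 v va Y1v.
Qed.

End StoneSpace.

Lemma imp_monor d (A : ctbDistrLatticeType d) (imp : A -> A -> A) :
  (forall a b c, (imp a b `&` imp a c)%O = imp a (b `&` c)%O) ->
  forall a b c, (b <= c)%O -> (imp a b <= imp a c)%O.
Proof. by move=> impI a b c bc; rewrite -(meet_l bc) -impI leIxr. Qed.

Section SigmaImp.
Variables (d : Order.disp_t) (A : ctbDistrLatticeType d) (imp : A -> A -> A).
Implicit Types U V : set (Ul A).

Lemma sigma_imp_subl U U' V : U `<=` U' -> sigma_imp imp U' V `<=` sigma_imp imp U V.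
Proof.
move=> UU' u [O [Y [oO U'O cY YV h]]].
by exists O, Y; split => //; exact: subset_trans U'O.
Qed.

Lemma sigma_imp_subr U V V' : V `<=` V' -> sigma_imp imp U V `<=` sigma_imp imp U V'.
Proof.
move=> VV' u [O [Y [oO UO cY YV h]]].
by exists O, Y; split => //; exact: subset_trans VV'.
Qed.

Lemma sigma_impT U : (forall a, imp a \top%O = \top%O) -> sigma_imp imp U setT = setT.
Proof.
move=> impT; apply/seteqP; split=> // u _.
exists setT, setT; split=> //; [exact: stone_openT|exact: stone_closedT|].
by move=> a b _ /setT_sub_phi ->; rewrite /phi/= impT; exact: ultra_top.
Qed.

Lemma sigma_impI U V W :
  (forall a b c, (imp a b `&` imp a c)%O = imp a (b `&` c)%O) ->
  sigma_imp imp U V `&` sigma_imp imp U W `<=` sigma_imp imp U (V `&` W).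
Proof.
move=> impI u [[O1 [Y1 [oO1 UO1 cY1 Y1V h1]]] [O2 [Y2 [oO2 UO2 cY2 Y2W h2]]]].
exists (O1 `&` O2), (Y1 `&` Y2); split.
- exact: stone_openI.
- by rewrite subsetI.
- exact: stone_closedI.
- exact: setISS.
move=> a b aO Yb; have [c1 [c2 [Y1c1 Y2c2 cb]]] := closedI_sub_phi cY1 cY2 Yb.
have aO1 : phi a `<=` O1 by move=> v /aO[].
have aO2 : phi a `<=` O2 by move=> v /aO[].
have := ultra_meet (h1 _ _ aO1 Y1c1) (h2 _ _ aO2 Y2c2).
by rewrite impI => /ultra_le; apply; exact: imp_monor.
Qed.

End SigmaImp.

Theorem theorem2p15 (d : Order.disp_t) (A : ctbDistrLatticeType d) (imp : A -> A -> A) :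
  conditional_algebra imp ->
  conditional_algebra (A := set (Ul A)) (sigma_imp imp).
Proof.
case=> impT impI _; split=> [U|U V W|U V W].
- by rewrite topEset sigma_impT.
- rewrite meetEset; apply/seteqP; split; first exact: sigma_impI.
  by rewrite subsetI; split; apply: sigma_imp_subr; [exact: subIsetl|exact: subIsetr].
- rewrite joinEset meetEset subsetEset subsetI.
  by split; apply: sigma_imp_subl; [exact: subsetUl|exact: subsetUr].
Qed.
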